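(* Let $G$ and $H$ be graphs, each with at least $2$ vertices. The lexicographic product $G[H]$ is $1$-perfectly orientable if and only if one of the following holds: (i) $G$ is edgeless and $H$ is $1$-perfectly orientable; (ii) $G$ is $1$-perfectly orientable and $H$ is complete; (iii) every connected component of $G$ is complete and $H$ is a co-bipartite $1$-perfectly orientable graph.
   Context: All graphs are finite and simple. An orientation of a graph $G$ is $1$-perfect if the out-neighborhood of every vertex induces a clique in $G$; $G$ is $1$-perfectly orientable if it admits a $1$-perfect orientation. The lexicographic product $G[H]$ has vertex set $V(G)\times V(H)$, with distinct $(u,v),(u',v')$ adjacent iff either $uu'\in E(G)$, or $u=u'$ and $vv'\in E(H)$. A graph is co-bipartite if its complement is bipartite. *)

From mathcomp Require Import all_boot.
Set Implicit Arguments. Unset Strict Implicit. Unset Printing Implicit Defensive.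

Definition simple_graph (T : finType) (e : rel T) : Prop :=
  symmetric e /\ irreflexive e.

Definition orientation (T : finType) (e : rel T) (o : rel T) : Prop :=
  (forall u v, o u v -> e u v) /\
  (forall u v, e u v -> (o u v || o v u)) /\
  (forall u v, o u v -> ~~ o v u).

Definition one_perfect (T : finType) (e : rel T) (o : rel T) : Prop :=
  orientation e o /\
  (forall u v w, o u v -> o u w -> v != w -> e v w).

Definition one_perfectly_orientable (T : finType) (e : rel T) : Prop :=
  exists o : rel T, one_perfect e o.

Definition lexprod (T1 T2 : finType) (e1 : rel T1) (e2 : rel T2)
  : rel (T1 * T2)%type :=
  fun x y => e1 x.1 y.1 || ((x.1 == y.1) && e2 x.2 y.2).

Definition edgeless (T : finType) (e : rel T) : Prop :=
  forall u v, ~~ e u v.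

Definition complete (T : finType) (e : rel T) : Prop :=
  forall u v, u != v -> e u v.

Definition components_complete (T : finType) (e : rel T) : Prop :=
  forall u v, connect e u v -> u != v -> e u v.

Definition bipartite (T : finType) (e : rel T) : Prop :=
  exists c : T -> bool, forall u v, e u v -> c u != c v.

Definition compl_rel (T : finType) (e : rel T) : rel T :=
  fun u v => (u != v) && ~~ e u v.

Definition cobipartite (T : finType) (e : rel T) : Prop :=
  bipartite (compl_rel e).

From mathcomp Require Import all_boot.
Set Implicit Arguments. Unset Strict Implicit. Unset Printing Implicit Defensive.

(* In a 1-perfect orientation a vertex sends at most one arc into an independent
   set, so no induced K_{2,3} can occur.  In G[H] an induced path of G together
   with a non-edge of H spans one, hence the components of G are cliques as soon
   as H is not complete.  For an edge ab of G the arcs between the copies H_a and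
   H_b alternate along every path of the complement of H, which 2-colours it.
   Conversely, if G is edgeless orient each copy of H; if H is complete orient
   G[H] lexicographically by an orientation of G and a linear order on V(H);
   if G is a disjoint union of cliques orient each copy of H and orient edges
   between copies by a linear order on V(G), reversed between vertices of
   different colours in a 2-colouring of the complement of H. *)

Lemma orientation_flip (T : finType) (e o : rel T) u v :
  orientation e o -> e u v -> o v u = ~~ o u v.
Proof.
move=> [_ [cov asym]] euv; apply/idP/idP => [/asym // | nouv].
by have := cov _ _ euv; rewrite (negbTE nouv).
Qed.

Lemma one_perfectly_orientable_induced (T T' : finType) (e : rel T) (e' : rel T')
    (f : T' -> T) :
  injective f -> (forall u v, e' u v = e (f u) (f v)) ->
  one_perfectly_orientable e -> one_perfectly_orientable e'.
Proof.
move=> f_inj ef [o [[oe [cov asym]] clique]].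
exists (fun u v => o (f u) (f v)); split; [split; [|split]|].
- by move=> u v /oe; rewrite ef.
- by move=> u v; rewrite ef => /cov.
- by move=> u v /asym.
- move=> u v w ouv ouw nvw; rewrite ef; apply: clique ouv ouw _.
  by apply: contra nvw => /eqP/f_inj->.
Qed.

(* Each p_i, resp. q_j, points to at most one vertex of the independent set on
   the other side, so at most 2 + 3 of the six edges p_i q_j get an arc. *)
Lemma one_perfect_noK23 (T : finType) (e o : rel T) p1 p2 q1 q2 q3 :
  one_perfect e o ->
  e p1 q1 -> e p1 q2 -> e p1 q3 -> e p2 q1 -> e p2 q2 -> e p2 q3 ->
  ~~ e p1 p2 -> ~~ e q1 q2 -> ~~ e q1 q3 -> ~~ e q2 q3 ->
  p1 != p2 -> q1 != q2 -> q1 != q3 -> q2 != q3 -> False.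
Proof.
move=> [[_ [cov _]] clique] e11 e12 e13 e21 e22 e23 n12 m12 m13 m23 d12 f12 f13 f23.
case/orP: (cov _ _ e11) => h11; case/orP: (cov _ _ e12) => h12;
case/orP: (cov _ _ e13) => h13; case/orP: (cov _ _ e21) => h21;
case/orP: (cov _ _ e22) => h22; case/orP: (cov _ _ e23) => h23;
match goal with
| H1 : is_true (o ?u ?v), H2 : is_true (o ?u ?w), Hn : is_true (?v != ?w),
  Hne : is_true (~~ e ?v ?w) |- _ => by move: (clique _ _ _ H1 H2 Hn); rewrite (negbTE Hne)
end.
Qed.

Lemma components_complete_of_P3_free (T : finType) (e : rel T) :
  (forall x y z, e x y -> e y z -> x != z -> e x z) -> components_complete e.
Proof.
move=> P3_free u v /connectP[p up ->] {v}.
elim: p u up => [|x p IHp] u /=; first by rewrite eqxx.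
case/andP=> ux xp nu; have [<- // | nx] := eqVneq x (last x p).
exact: P3_free ux (IHp x xp nx) nu.
Qed.

Lemma edgeless_or_edge (T : finType) (e : rel T) : edgeless e \/ exists u v, e u v.
Proof.
have [/existsP[u /existsP[v euv]] | no_edge] := boolP [exists u, exists v, e u v].
  by right; exists u, v.
left=> u v; apply: contra no_edge => euv.
by apply/existsP; exists u; apply/existsP; exists v.
Qed.

Lemma complete_or_nonedge (T : finType) (e : rel T) :
  complete e \/ exists u v, u != v /\ ~~ e u v.
Proof.
have [/forallP cpl | /forallPn[u /forallPn[v]]] := boolP [forall u, forall v, (u != v) ==> e u v].
  by left=> u v; move/forallP: (cpl u) => /(_ v)/implyP.
by rewrite negb_imply => /andP[nuv neuv]; right; exists u, v.
Qed.

Lemma compl_rel_sym (T : finType) (e : rel T) : symmetric e -> symmetric (compl_rel e).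
Proof. by move=> sym u v; rewrite /compl_rel eq_sym sym. Qed.

Definition rank_lt (T : finType) : rel T := fun x y => enum_rank x < enum_rank y.

Lemma rank_lt_irr (T : finType) : irreflexive (@rank_lt T).
Proof. by move=> x; apply: ltnn. Qed.

Lemma rank_lt_asym (T : finType) (x y : T) : rank_lt x y -> ~~ rank_lt y x.
Proof. by rewrite /rank_lt -leqNgt; apply: ltnW. Qed.

Lemma rank_lt_total (T : finType) (x y : T) : x != y -> rank_lt x y || rank_lt y x.
Proof.
move=> nxy; rewrite /rank_lt -neq_ltn; apply: contra nxy => /eqP eq_rk.
exact/eqP/enum_rank_inj/val_inj.
Qed.

Section LexProduct.

Variables (T1 T2 : finType) (e1 : rel T1) (e2 : rel T2).
Hypotheses (sym1 : symmetric e1) (irr1 : irreflexive e1).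
Hypotheses (sym2 : symmetric e2) (irr2 : irreflexive e2).

Local Notation lex := (lexprod e1 e2).

Lemma lexprod_row a x y : lex (a, x) (a, y) = e2 x y.
Proof. by rewrite /lexprod /= irr1 eqxx. Qed.

Lemma lexprod_column a b x : lex (a, x) (b, x) = e1 a b.
Proof. by rewrite /lexprod /= irr2 andbF orbF. Qed.

Lemma lexprod_cross a b x y : e1 a b -> lex (a, x) (b, y).
Proof. by rewrite /lexprod /= => ->. Qed.

Lemma one_perfectly_orientable_lexprod_edgeless :
  edgeless e1 -> one_perfectly_orientable e2 -> one_perfectly_orientable lex.
Proof.
move=> eG [o [[oe [cov asym]] clique]].
exists (fun u v => (u.1 == v.1) && o u.2 v.2); split; [split; [|split]|].
- by move=> [a x] [b y] /= /andP[/eqP <- /oe]; rewrite lexprod_row.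
- move=> [a x] [b y]; rewrite /lexprod /= (negbTE (eG a b)) => /andP[/eqP <- /cov].
  by rewrite eqxx.
- by move=> [a x] [b y] /= /andP[/eqP <- /asym]; rewrite eqxx.
- move=> [a x] [b y] [d z] /= /andP[/eqP <- oxy] /andP[/eqP <- oxz] nyz.
  rewrite lexprod_row (clique _ _ _ oxy oxz) //.
  by apply: contra nyz => /eqP->.
Qed.

Lemma one_perfectly_orientable_lexprod_complete :
  one_perfectly_orientable e1 -> complete e2 -> one_perfectly_orientable lex.
Proof.
move=> [o [[oe [cov asym]] clique]] cH.
have oaa a : o a a = false by apply/negP => /oe; rewrite irr1.
exists (fun u v => o u.1 v.1 || (u.1 == v.1) && rank_lt u.2 v.2).
split; [split; [|split]|].
- move=> [a x] [b y] /= /orP[/oe/lexprod_cross // | /andP[/eqP <- lt_xy]].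
  rewrite lexprod_row cH //.
  by apply: contraTneq lt_xy => ->; rewrite rank_lt_irr.
- move=> [a x] [b y]; rewrite /lexprod /= => /orP[/cov/orP[] -> // | ].
    by rewrite orbT.
  case/andP=> /eqP <- exy; rewrite eqxx oaa /= rank_lt_total //.
  by apply: contraTneq exy => ->; rewrite irr2.
- move=> [a x] [b y] /= /orP[oab | /andP[/eqP <- lt_xy]].
    have nba : b != a by apply: contraTneq (oe _ _ oab) => ->; rewrite irr1.
    by rewrite negb_or asym //= (negbTE nba).
  by rewrite oaa eqxx rank_lt_asym.
- move=> [a x] [b y] [d z] /= h1 h2 ne; rewrite /lexprod /=.
  case: (eqVneq b d) ne => [<- | nbd] ne.
    by rewrite /= cH ?orbT //; apply: contra ne => /eqP->.
  case/orP: h1 => [oab | /andP[/eqP eqab _]]; case/orP: h2 => [oad | /andP[/eqP eqad _]].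
  + by rewrite (clique _ _ _ oab oad nbd).
  + by rewrite -eqad sym1 (oe _ _ oab).
  + by rewrite -eqab (oe _ _ oad).
  + by rewrite -eqab -eqad eqxx in nbd.
Qed.

Lemma one_perfectly_orientable_lexprod_cobipartite :
  components_complete e1 -> cobipartite e2 -> one_perfectly_orientable e2 ->
  one_perfectly_orientable lex.
Proof.
move=> cc [c c_compl] [o [[oe [cov asym]] clique]].
exists (fun u v => (u.1 == v.1) && o u.2 v.2
                   || e1 u.1 v.1 && (rank_lt u.1 v.1 == (c u.2 == c v.2))).
have nab a b : e1 a b -> a != b by move=> eab; apply: contraTneq eab => ->; rewrite irr1.
split; [split; [|split]|].
- move=> [a x] [b y] /= /orP[/andP[/eqP <- /oe] | /andP[/lexprod_cross // _]].
  by rewrite lexprod_row.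
- move=> [a x] [b y]; rewrite /lexprod /= => /orP[eab | /andP[/eqP <- exy]].
    rewrite eab sym1 eab (eq_sym b) (negbTE (nab _ _ eab)) /= (eq_sym (c y)).
    have /orP[lt | lt] := rank_lt_total (nab _ _ eab);
      by rewrite lt (negbTE (rank_lt_asym lt)); case: (c x == c y).
  by rewrite eqxx irr1 /= !orbF; apply: cov.
- move=> [a x] [b y] /= /orP[/andP[/eqP <- /asym oyx] | /andP[eab lt_ab]].
    by rewrite eqxx irr1 /= orbF.
  rewrite eq_sym (negbTE (nab _ _ eab)) sym1 eab /= (eq_sym (c y)).
  have /orP[lt | lt] := rank_lt_total (nab _ _ eab);
    by move: lt_ab; rewrite lt (negbTE (rank_lt_asym lt)); case: (c x == c y).
- move=> [a x] [b y] [d z] /= h1 h2 ne; rewrite /lexprod /=.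
  case/orP: h1 => [/andP[/eqP eqab oxy] | /andP[eab lt_ab]];
  case/orP: h2 => [/andP[/eqP eqad oxz] | /andP[ead lt_ad]].
  + subst b d; rewrite eqxx (clique _ _ _ oxy oxz) ?orbT //.
    by apply: contra ne => /eqP->.
  + by rewrite -eqab ead.
  + by rewrite -eqad sym1 eab.
  + have [eqbd | nbd] := eqVneq b d; last first.
      by rewrite cc // (connect_trans (connect1 (_ : e1 b a))) ?connect1 // sym1.
    subst d.
    have nyz : y != z by apply: contra ne => /eqP->.
    have cyz : c y = c z.
      by move: lt_ab lt_ad => /eqP-> /eqP; case: (c x); case: (c y); case: (c z).
    rewrite irr1 /=; apply: contraT => neyz.
    by have := c_compl y z; rewrite /compl_rel nyz neyz cyz eqxx => /(_ isT).
Qed.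

Lemma one_perfectly_orientable_lexprod_r (a : T1) :
  one_perfectly_orientable lex -> one_perfectly_orientable e2.
Proof.
apply: (one_perfectly_orientable_induced (f := fun x => (a, x))) => [x y [] // | x y].
by rewrite lexprod_row.
Qed.

Lemma one_perfectly_orientable_lexprod_l (x : T2) :
  one_perfectly_orientable lex -> one_perfectly_orientable e1.
Proof.
apply: (one_perfectly_orientable_induced (f := fun a => (a, x))) => [a b [] // | a b].
by rewrite lexprod_column.
Qed.

Section OnePerfectLexprod.

Variable o : rel (T1 * T2).
Hypothesis op : one_perfect lex o.

(* An induced path a - b - c of G and a non-edge xy of H span an induced K_{2,3}
   with sides {(b,x), (b,y)} and {(a,x), (a,y), (c,x)}. *)
Lemma lexprod_components_complete x y :
  x != y -> ~~ e2 x y -> components_complete e1.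
Proof.
move=> nxy nexy; apply: components_complete_of_P3_free => a b c eab ebc nac.
apply: contraT => neac; exfalso.
apply: (one_perfect_noK23 (p1 := (b, x)) (p2 := (b, y)) (q1 := (a, x)) (q2 := (a, y))
  (q3 := (c, x)) op);
  rewrite /lexprod ?xpair_eqE /= ?eqxx ?irr1 ?irr2 ?(sym1 b a) ?eab ?ebc
    ?(negbTE nac) ?(negbTE neac) ?(negbTE nexy) ?(negbTE nxy) ?andbF //.
Qed.

Lemma lexprod_out_compl p b y v : compl_rel e2 y v -> o p (b, y) -> ~~ o p (b, v).
Proof.
move=> /andP[nyv neyv] opy; apply/negP => opv; have [_ clique] := op.
suff /(clique _ _ _ opy opv) : (b, y) != (b, v) by rewrite lexprod_row (negbTE neyv).
by apply: contra nyv => /eqP[->].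
Qed.

Lemma lexprod_arc_compl_l a b u x v : e1 a b ->
  ~~ o (a, x) (b, v) -> compl_rel e2 u x -> o (a, u) (b, v).
Proof.
have [ori _] := op; move=> eab nox ux.
have ovx : o (b, v) (a, x) by rewrite (orientation_flip ori) ?lexprod_cross.
have xu : compl_rel e2 x u by rewrite compl_rel_sym.
have := lexprod_out_compl xu ovx.
by rewrite (orientation_flip ori) ?lexprod_cross // negbK.
Qed.

Lemma lexprod_diag_compl a b u x : e1 a b ->
  o (a, u) (b, u) -> compl_rel e2 u x -> o (a, x) (b, x).
Proof.
move=> eab ouu ux; have xu : compl_rel e2 x u by rewrite compl_rel_sym.
exact: lexprod_arc_compl_l eab (lexprod_out_compl ux ouu) xu.
Qed.

Lemma lexprod_arc_compl_path a b u p : e1 a b -> o (a, u) (b, u) ->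
  path (compl_rel e2) u p -> o (a, u) (b, last u p) = ~~ odd (size p).
Proof.
move=> eab; have [n] := ubnP (size p); elim: n u p => // n IHn u p size_lt ouu.
have [odd_p | even_p] := boolP (odd (size p)).
- case/lastP: p odd_p size_lt => [// | q z].
  rewrite size_rcons rcons_path last_rcons /= => even_q size_lt /andP[uq qz].
  apply/negbTE/(lexprod_out_compl qz).
  by rewrite IHn // ltnW.
- case: p even_p size_lt => [// | x p] /= /negbNE odd_p size_lt /andP[ux xp].
  apply: (lexprod_arc_compl_l eab _ ux).
  by rewrite IHn ?odd_p // (lexprod_diag_compl eab ouu ux).
Qed.

Lemma lexprod_arc_compl_edge a b r u v : e1 a b -> o (a, r) (b, r) ->
  connect (compl_rel e2) r u -> compl_rel e2 u v -> o (a, r) (b, u) != o (a, r) (b, v).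
Proof.
move=> eab orr /connectP[p rp ->] uv.
have rpv : path (compl_rel e2) r (rcons p v) by rewrite rcons_path rp uv.
rewrite (lexprod_arc_compl_path eab orr rp) -[v](last_rcons r p).
by rewrite (lexprod_arc_compl_path eab orr rpv) size_rcons /=; case: odd.
Qed.

(* Colour v by the arc between (a, r) and (b, v), where r is the root of the
   component of v in the complement of H, and a, b are swapped if needed so
   that (a, r) -> (b, r). *)
Lemma lexprod_cobipartite a b : e1 a b -> cobipartite e2.
Proof.
move=> eab; have [ori _] := op.
have csym : connect_sym (compl_rel e2) by apply/sym_connect_sym/compl_rel_sym.
pose r v := root (compl_rel e2) v.
exists (fun v => if o (a, r v) (b, r v) then o (a, r v) (b, v) else o (b, r v) (a, v)).
move=> u v uv; have ruv : r u = r v by apply/(rootP csym)/connect1.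
have ru : connect (compl_rel e2) (r v) u by rewrite csym -ruv connect_root.
rewrite ruv; case: ifP => orr; first exact: lexprod_arc_compl_edge eab orr ru uv.
apply: lexprod_arc_compl_edge ru uv; first by rewrite sym1.
by rewrite (orientation_flip ori) ?lexprod_cross // orr.
Qed.

End OnePerfectLexprod.
End LexProduct.

Theorem theorem8 (T1 T2 : finType) (e1 : rel T1) (e2 : rel T2) :
  simple_graph e1 -> simple_graph e2 ->
  1 < #|T1| -> 1 < #|T2| ->
  (one_perfectly_orientable (lexprod e1 e2) <->
   [\/ edgeless e1 /\ one_perfectly_orientable e2,
       one_perfectly_orientable e1 /\ complete e2
     | components_complete e1 /\ cobipartite e2 /\ one_perfectly_orientable e2]).
Proof.
move=> [sym1 irr1] [sym2 irr2] /card_gt1P[a0 _] /card_gt1P[x0 _]; split.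
- move=> opo_lex; have [o op] := opo_lex.
  have opoG := one_perfectly_orientable_lexprod_l irr2 x0 opo_lex.
  have opoH := one_perfectly_orientable_lexprod_r irr1 a0 opo_lex.
  have [eG | [a [b eab]]] := edgeless_or_edge e1; first by constructor 1.
  have [cH | [x [y [nxy nexy]]]] := complete_or_nonedge e2; first by constructor 2.
  constructor 3; split; last split=> //.
    exact: (lexprod_components_complete sym1 irr1 irr2 op nxy nexy).
  exact: (lexprod_cobipartite sym1 irr1 sym2 op eab).
- case=> [[eG opoH] | [opoG cH] | [cc [cob opoH]]].
  + exact: one_perfectly_orientable_lexprod_edgeless.
  + exact: one_perfectly_orientable_lexprod_complete.
  + exact: one_perfectly_orientable_lexprod_cobipartite.
Qed.
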